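(* Let $G$ be an essentially $4$-edge-connected bipartite cubic graph with bipartition $(X,Y)$. Let $x\in X$ and $y\in Y$. Then $G-(N_G[x]\cup N_G[y])$ has a perfect matching.
   Context: $N_G[v]=\{v\}\cup N_G(v)$ is the closed neighborhood. A 3-connected cubic graph is essentially 4-edge-connected if every edge cut consisting of three edges $\{e_1,e_2,e_3\}$ induces $K_{1,3}$, i.e., the three edges are the three edges incident to a single vertex. *)

From mathcomp Require Import all_boot.
Set Implicit Arguments. Unset Strict Implicit. Unset Printing Implicit Defensive.

Section Graphs.
Variable V : finType.

Definition simple_graph (adj : rel V) : Prop :=
  symmetric adj /\ irreflexive adj.

Definition nbhd (adj : rel V) (v : V) : {set V} := [set u | adj v u].
Definition cnbhd (adj : rel V) (v : V) : {set V} := v |: nbhd adj v.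

Definition cubic (adj : rel V) : Prop := forall v, #|nbhd adj v| = 3.

Definition connected_on (adj : rel V) (W : {set V}) : Prop :=
  forall u v, u \in W -> v \in W ->
    connect [rel a b | [&& adj a b, a \in W & b \in W]] u v.

Definition k_connected (k : nat) (adj : rel V) : Prop :=
  k < #|V| /\ forall S : {set V}, #|S| < k -> connected_on adj (~: S).

Definition cut_size (adj : rel V) (S : {set V}) : nat :=
  #|[set p : V * V | [&& p.1 \in S, p.2 \notin S & adj p.1 p.2]]|.

Definition cut_is_star (adj : rel V) (S : {set V}) (v : V) : Prop :=
  forall a b, adj a b ->
    ((a \in S) && (b \notin S) || (b \in S) && (a \notin S)) = ((a == v) || (b == v)).

Definition ess_4_edge_connected (adj : rel V) : Prop :=
  k_connected 3 adj /\ cubic adj /\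
  forall S : {set V}, cut_size adj S = 3 -> exists v, cut_is_star adj S v.

Definition bipartition (adj : rel V) (X : {set V}) : Prop :=
  forall a b, adj a b -> (a \in X) != (b \in X).

Definition perfect_matching_on (adj : rel V) (W : {set V}) (M : {set {set V}}) : Prop :=
  (forall e, e \in M -> exists u v, [/\ e = [set u; v], u \in W, v \in W & adj u v])
  /\ (forall w, w \in W -> exists! e, e \in M /\ w \in e).

Definition has_perfect_matching_on (adj : rel V) (W : {set V}) : Prop :=
  exists M, perfect_matching_on adj W M.
End Graphs.

(* Let W be the vertex set of G - (N[x] u N[y]).  By Hall's theorem it suffices
   that every subset S of X n W has at least |S| neighbours in W, and likewise on the
   Y side: injections in both directions force |X n W| = |Y n W|, so either one
   is a perfect matching.  If the set B of neighbours of S in W were smaller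
   than S, put C = {x} u S u N(x) u B.  A neighbour of S outside W lies in N(x),
   so no edge leaves C n X = {x} u S, and counting the edges of the cubic
   bipartite graph gives |d(C)| = 3(|B| + 3) - 3(|S| + 1) <= 3, i.e. |d(C)| is
   0 or 3.  As C and its complement (which contains N(y) - x) both have at
   least two vertices, this contradicts connectivity or essential
   4-edge-connectivity. *)

From mathcomp Require Import all_boot zify.
Set Implicit Arguments. Unset Strict Implicit. Unset Printing Implicit Defensive.

Section Hall.
Variables T T' : finType.
Implicit Types (L S : {set T}) (N : T -> {set T'}) (f : T -> T').

Definition hall_condition N L :=
  forall S, S \subset L -> #|S| <= #|\bigcup_(u in S) N u|.

Definition sdr N L f := {in L, forall u, f u \in N u} /\ {in L &, injective f}.

Lemma sdr_sub N N' L f :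
  {in L, forall u, N u \subset N' u} -> sdr N L f -> sdr N' L f.
Proof.
by move=> sNN' [fN f_inj]; split=> // u uL; apply: subsetP (sNN' u uL) _ (fN u uL).
Qed.

Lemma sdr_glue N A B f1 f2 :
  sdr N A f1 -> sdr (fun u => N u :\: f1 @: A) B f2 ->
  sdr N (A :|: B) (fun u => if u \in A then f1 u else f2 u).
Proof.
move=> [f1N f1_inj] [f2N f2_inj]; split=> [u|u v].
  by case: ifP => [uA _|uA]; [exact: f1N | rewrite inE uA => /f2N /setDP[]].
have f2_new w z : w \in B -> z \in A -> f2 w != f1 z.
  by move=> /f2N /setDP[_ f2w] zA; apply: contraNneq f2w => ->; apply: imset_f.
rewrite !inE; case: ifP => uA; case: ifP => vA //= uB vB.
- exact: f1_inj.
- by move/eqP; rewrite eq_sym (negbTE (f2_new _ _ vB uA)).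
- by move/eqP; rewrite (negbTE (f2_new _ _ uB vA)).
- exact: f2_inj.
Qed.

Lemma sdr_leq_card N L (R : {set T'}) f :
  sdr N L f -> {in L, forall u, N u \subset R} -> #|L| <= #|R|.
Proof.
move=> [fN f_inj] sNR; rewrite -(card_in_imset f_inj); apply/subset_leq_card/subsetP.
by move=> _ /imsetP[u uL ->]; apply: subsetP (sNR u uL) _ (fN u uL).
Qed.

Lemma hall_conditionS N L S :
  S \subset L -> hall_condition N L -> hall_condition N S.
Proof. by move=> sSL hallL S' sS'S; apply/hallL/(subset_trans sS'S). Qed.

Lemma hall_tight N L S :
  hall_condition N L -> S \subset L -> #|\bigcup_(u in S) N u| <= #|S| ->
  hall_condition (fun u => N u :\: \bigcup_(v in S) N v) (L :\: S).
Proof.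
move=> hallL sSL tightS T0 sT0; set NS := \bigcup_(v in S) N v in tightS *.
set R := \bigcup_(u in T0) (N u :\: NS).
have dT0S : [disjoint T0 & S].
  by rewrite disjoints_subset (subset_trans sT0) // setDE subsetIr.
have sub : \bigcup_(u in T0 :|: S) N u \subset NS :|: R.
  apply/subsetP => v /bigcupP[u]; rewrite !inE; case: (boolP (v \in NS)) => //= vNS.
  case/orP=> [uT0 vNu|uS vNu]; last by case/bigcupP: vNS; exists u.
  by apply/bigcupP; exists u; rewrite // inE vNS.
have := hallL (T0 :|: S); rewrite subUset sSL (subset_trans sT0 (subsetDl _ _)).
move=> /(_ isT) /leq_trans /(_ (subset_leq_card sub)).
by rewrite cardsU (disjoint_setI0 dT0S) cards0 subn0 cardsU; lia.
Qed.

Lemma hall_slack N L u v :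
  hall_condition N L ->
  (forall S, S \proper L -> S != set0 -> #|S| < #|\bigcup_(w in S) N w|) ->
  u \in L -> hall_condition (fun w => N w :\ v) (L :\ u).
Proof.
move=> hallL slackL uL T0 sT0; have [->|T0_n0] := eqVneq T0 set0; first by rewrite cards0.
have pT0 : T0 \proper L.
  apply/properP; split; first exact: subset_trans sT0 (subsetDl _ _).
  by exists u => //; apply/negP => /(subsetP sT0); rewrite !inE eqxx.
have sub : (\bigcup_(w in T0) N w) :\ v \subset \bigcup_(w in T0) (N w :\ v).
  apply/subsetP => z /setD1P[zv /bigcupP[w wT0 zNw]].
  by apply/bigcupP; exists w; rewrite // in_setD1 zv.
have := subset_leq_card sub; have := slackL T0 pT0 T0_n0.
have := cardsD1 v (\bigcup_(w in T0) N w); lia.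
Qed.

Theorem hall_sdr (d : T') N L : hall_condition N L -> exists f, sdr N L f.
Proof.
(* Split L at a tight proper subset if there is one; otherwise every proper
   subset has a surplus, so any u in L may be matched first to any v in N u. *)
move: {2}#|L| (leqnn #|L|) => n; elim: n L N => [|n IH] L N leLn hallL.
  exists (fun=> d); move: leLn; rewrite leqn0 cards_eq0 => /eqP->.
  by split=> ?; rewrite inE.
have [/existsP[S /and3P[pSL S_n0 tightS]]|slackL] :=
  boolP [exists S : {set T},
           [&& S \proper L, S != set0 & #|\bigcup_(u in S) N u| <= #|S|]].
  have sSL := proper_sub pSL.
  have [f1 f1_sdr] : exists f1, sdr N S f1.
    apply: IH (hall_conditionS sSL hallL); have := proper_card pSL; lia.
  have [f2 f2_sdr] : exists f2, sdr (fun u => N u :\: \bigcup_(v in S) N v) (L :\: S) f2.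
    apply: IH (hall_tight hallL sSL tightS).
    by move: S_n0; rewrite cardsD (setIidPr sSL) -card_gt0; lia.
  exists (fun u => if u \in S then f1 u else f2 u).
  rewrite -(setID L S) (setIidPr sSL); apply: (sdr_glue f1_sdr).
  apply: sdr_sub f2_sdr => u _; apply/setDS/subsetP => _ /imsetP[w wS ->].
  by apply/bigcupP; exists w; last by case: f1_sdr => + _; apply.
have [->|[u uL]] := set_0Vmem L; first by exists (fun=> d); split=> ?; rewrite inE.
have /card_gt0P[v vNu] : 0 < #|N u|.
  by have := hallL [set u]; rewrite sub1set uL big_set1 cards1; apply.
have [f2 f2_sdr] : exists f2, sdr (fun w => N w :\ v) (L :\ u) f2.
  apply: IH; first by have := cardsD1 u L; rewrite uL; lia.
  apply: hall_slack hallL _ uL => S pSL S_n0; rewrite ltnNge.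
  by apply: contra slackL => tightS; apply/existsP; exists S; rewrite pSL S_n0.
exists (fun w => if w \in [set u] then v else f2 w).
rewrite -(setD1K uL); apply: sdr_glue; last by rewrite imset_set1.
by split=> [w /set1P-> //|w z /set1P-> /set1P->].
Qed.

End Hall.

Section EdgeCounting.
Variables (V : finType) (adj : rel V).
Implicit Types (A B C P Q X : {set V}).

Definition ecount A B : nat := \sum_(a in A) \sum_(b in B) adj a b.

Lemma ecountC A B : symmetric adj -> ecount A B = ecount B A.
Proof.
move=> adj_sym; rewrite /ecount exchange_big.
by apply: eq_bigr => b _; apply: eq_bigr => a _; rewrite adj_sym.
Qed.

Lemma ecountUl A1 A2 B :
  [disjoint A1 & A2] -> ecount (A1 :|: A2) B = ecount A1 B + ecount A2 B.
Proof. by move=> dA; rewrite /ecount -bigU //; apply: eq_bigl => a; rewrite !inE. Qed.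

Lemma ecountUr A B1 B2 :
  [disjoint B1 & B2] -> ecount A (B1 :|: B2) = ecount A B1 + ecount A B2.
Proof.
move=> dB; rewrite /ecount -big_split; apply: eq_bigr => a _.
by rewrite -bigU //; apply: eq_bigl => b; rewrite !inE.
Qed.

Lemma ecount_setT A : cubic adj -> ecount A setT = 3 * #|A|.
Proof.
move=> adj_cubic; rewrite /ecount mulnC -sum_nat_const; apply: eq_bigr => a _.
rewrite -(adj_cubic a) -sum1_card [RHS]big_mkcond.
by apply: eq_big => [b|b _]; rewrite !inE //; case: (adj a b).
Qed.

Lemma ecount_eq0 A B :
  (forall a b, a \in A -> b \in B -> ~~ adj a b) -> ecount A B = 0.
Proof.
move=> noedge; apply: big1 => a aA; apply: big1 => b bB.
by rewrite (negbTE (noedge a b aA bB)).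
Qed.

Lemma cut_sizeE C : cut_size adj C = ecount C (~: C).
Proof.
rewrite /cut_size -sum1_card big_mkcond /ecount pair_big_dep [RHS]big_mkcond /=.
apply: eq_bigr => -[a b] _; rewrite !inE /=.
by case: (a \in C); case: (b \in C); case: (adj a b).
Qed.

Lemma bipartition_adj X a b : bipartition adj X -> adj a b -> (a \in X) = (b \notin X).
Proof. by move=> bipX /bipX; case: (a \in X); case: (b \in X). Qed.

Lemma bipartitionC X : bipartition adj X -> bipartition adj (~: X).
Proof. by move=> bipX a b /bipX; rewrite !inE; case: (a \in X); case: (b \in X). Qed.

Lemma cut_size_bipartite X P Q :
  symmetric adj -> cubic adj -> bipartition adj X -> P \subset X -> Q \subset ~: X ->
  (forall a b, a \in P -> adj a b -> b \in P :|: Q) ->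
  cut_size adj (P :|: Q) + 3 * #|P| = 3 * #|Q|.
Proof.
move=> adj_sym adj_cubic bipX sPX sQX closedP; set C := P :|: Q.
have dPQ : [disjoint P & Q].
  by rewrite disjoint_sym disjoints_subset (subset_trans sQX) ?setCS.
have splitT B : ecount B setT = ecount B P + ecount B Q + ecount B (~: C).
  by rewrite -(setUCr C) !ecountUr // disjoints_subset setCK.
have sameside B : B \subset X \/ B \subset ~: X -> ecount B B = 0.
  move=> sBX; apply: ecount_eq0 => a b aB bB; apply/negP => /(bipartition_adj bipX).
  case: sBX => /subsetP sB; move: (sB a aB) (sB b bB); rewrite ?inE;
    by case: (a \in X); case: (b \in X).
have ePout : ecount P (~: C) = 0.
  by apply: ecount_eq0 => a b aP; rewrite inE; apply: contra; apply: closedP.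
rewrite cut_sizeE ecountUl // ePout.
have := splitT P; have := splitT Q; rewrite !ecount_setT //.
rewrite ePout (ecountC _ _ adj_sym) !sameside; [lia | by left | by right].
Qed.

End EdgeCounting.

Section Cuts.
Variables (V : finType) (adj : rel V).
Implicit Types (C X : {set V}).

Lemma cut_size0_closed C : symmetric adj -> cut_size adj C = 0 -> closed adj C.
Proof.
move=> adj_sym /cards0_eq cut0.
suff out a b : adj a b -> a \in C -> b \in C.
  by move=> a b ab; apply/idP/idP; apply: out; rewrite // adj_sym.
move=> ab aC; apply: contraT => bNC.
by have := in_set0 (a, b); rewrite -cut0 inE /= aC bNC ab.
Qed.

Lemma connected_closed k C u w :
  k_connected k adj -> 0 < k -> closed adj C -> u \in C -> w \in C.
Proof.
move=> [_ conn] k_gt0 closedC uC.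
have := conn set0; rewrite cards0 => /(_ k_gt0 u w); rewrite !inE => /(_ isT isT).
have closedC' : closed [rel a b | [&& adj a b, a \in ~: set0 & b \in ~: set0]] C.
  by move=> a b /andP[/closedC].
by move/(closed_connect closedC'); rewrite uC.
Qed.

Lemma cut_is_starC C v : cut_is_star adj C v -> cut_is_star adj (~: C) v.
Proof.
by move=> star a b ab; rewrite -star // !inE; case: (a \in C); case: (b \in C).
Qed.

Lemma cut_is_star_closedD1 C v : cut_is_star adj C v -> v \in C -> closed adj (C :\ v).
Proof.
move=> star vC a b ab; have := star a b ab; rewrite !in_setD1.
case: eqP => [->|_]; case: eqP => [->|_]; rewrite ?vC //=;
  by case: (a \in C); case: (b \in C).
Qed.

Lemma ess_4_edge_connected_cut3 C :
  ess_4_edge_connected adj -> cut_size adj C = 3 -> 2 <= #|C| -> 2 <= #|~: C| -> False.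
Proof.
move=> [conn [_ ess]] /ess[v star].
wlog vC : C star / v \in C => [wlog_vC|].
  have [vC|vNC] := boolP (v \in C); first exact: wlog_vC.
  by move=> ? ?; apply: (wlog_vC (~: C)); rewrite ?setCK ?inE //; apply: cut_is_starC.
move=> C_ge2 _; have /card_gt0P[u uCv] : 0 < #|C :\ v|.
  by have := cardsD1 v C; rewrite vC; lia.
have := connected_closed v conn isT (cut_is_star_closedD1 star vC) uCv.
by rewrite !inE eqxx.
Qed.

End Cuts.

Lemma sdr_perfect_matching (V : finType) (adj : rel V) (L R : {set V}) f :
  [disjoint L & R] -> sdr (fun u => nbhd adj u :&: R) L f -> #|R| <= #|L| ->
  perfect_matching_on adj (L :|: R) [set [set u; f u] | u in L].
Proof.
move=> dLR f_sdr leRL; have [fN f_inj] := f_sdr.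
have fLR : f @: L = R.
  apply/eqP; rewrite eqEcard (card_in_imset f_inj) leRL andbT.
  by apply/subsetP => _ /imsetP[u /fN /setIP[_ fuR] ->].
have notLR v : v \in L -> v \in R -> False by move=> vL; rewrite (disjointFr dLR vL).
split=> [_ /imsetP[u uL ->]|w].
  have /setIP[ufu fuR] := fN u uL; exists u, (f u).
  by split; rewrite // ?inE ?uL ?fuR ?orbT // in ufu *.
case/setUP=> [wL|]; last rewrite -fLR => /imsetP[u uL ->].
  exists [set w; f w]; split; first by split; [apply: imset_f | rewrite !inE eqxx].
  move=> _ [/imsetP[u uL ->]]; rewrite !inE => /orP[/eqP-> //|/eqP wfu].
  by case: (notLR w wL); rewrite wfu -fLR imset_f.
exists [set u; f u]; split; first by split; [apply: imset_f | rewrite !inE eqxx orbT].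
move=> _ [/imsetP[u' u'L ->]]; rewrite !inE => /orP[/eqP fuu'|/eqP fuu'].
  by case: (notLR u' u'L); rewrite -fuu' -fLR imset_f.
by rewrite (f_inj _ _ uL u'L fuu').
Qed.

Section NeighbourhoodsRemoved.
Variables (V : finType) (adj : rel V) (X : {set V}) (x y : V).
Hypotheses (adj_simple : simple_graph adj) (adj_ess4 : ess_4_edge_connected adj).
Hypotheses (bipX : bipartition adj X) (xX : x \in X) (yNX : y \notin X).

Let W := ~: (cnbhd adj x :|: cnbhd adj y).

Lemma mem_W u : (u \in W) = [&& u != x, ~~ adj x u, u != y & ~~ adj y u].
Proof. by rewrite !inE !negb_or -!andbA. Qed.

Lemma adj_x_notin b : adj x b -> b \notin X.
Proof. by move/(bipartition_adj bipX); rewrite xX => <-. Qed.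

Lemma adj_y_in d : adj y d -> d \in X.
Proof. by move/(bipartition_adj bipX); rewrite (negbTE yNX) => /esym/negbFE. Qed.

Section HallViolator.
Variable S : {set V}.
Hypothesis sSXW : S \subset X :&: W.

Let B := \bigcup_(u in S) (nbhd adj u :&: W).
Let P := x |: S.
Let Q := nbhd adj x :|: B.

Lemma S_XW u : u \in S -> u \in X /\ u \in W.
Proof. by move/(subsetP sSXW)/setIP. Qed.

Lemma B_W_notin b : b \in B -> b \in W /\ b \notin X.
Proof.
case/bigcupP=> u /S_XW[uX _] /setIP[ub bW]; split=> //.
by move: ub; rewrite inE => /(bipartition_adj bipX); rewrite uX => <-.
Qed.

Lemma P_sub_X : P \subset X.
Proof. by apply/subsetP => u /setU1P[->|/S_XW[]]. Qed.

Lemma Q_sub_notX : Q \subset ~: X.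
Proof.
by apply/subsetP => u; rewrite !inE => /orP[/adj_x_notin|/B_W_notin[]].
Qed.

Lemma P_closed a b : a \in P -> adj a b -> b \in P :|: Q.
Proof.
case/setU1P=> [->|aS] ab; first by rewrite !inE ab !orbT.
have [aX aW] := S_XW aS.
have [bW|] := boolP (b \in W).
  apply/setUP; right; apply/setUP; right; apply/bigcupP.
  by exists a; rewrite // inE bW andbT inE.
rewrite mem_W !negb_and !negbK => /or4P[/eqP->|xb|/eqP by_|yb].
- by rewrite !inE eqxx.
- by rewrite !inE xb !orbT.
- by move: aW; rewrite mem_W -by_ (adj_simple.1 b) ab !andbF.
- by move: (adj_y_in yb); rewrite -(negbK (b \in X)) -(bipartition_adj bipX ab) aX.
Qed.

Lemma nbhd_yD1_sub_setC : nbhd adj y :\ x \subset ~: (P :|: Q).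
Proof.
apply/subsetP => d /setD1P[dx]; rewrite inE => yd; rewrite inE; apply/negP.
case/setUP=> [/setU1P[/eqP|/S_XW[_]]|/(subsetP Q_sub_notX)]; first exact/negP.
  by rewrite mem_W yd !andbF.
by rewrite inE adj_y_in.
Qed.

Lemma card_P : #|P| = #|S|.+1.
Proof.
rewrite cardsU1; suff -> : x \notin S by [].
by apply/negP => /S_XW[_]; rewrite mem_W eqxx.
Qed.

Lemma card_Q : #|Q| = #|B| + 3.
Proof.
rewrite cardsU adj_ess4.2.1 addnC.
suff -> : nbhd adj x :&: B = set0 by rewrite cards0 subn0.
apply/eqP; rewrite setI_eq0 disjoint_sym disjoints_subset.
by apply/subsetP => b /B_W_notin[]; rewrite mem_W !inE => /and4P[].
Qed.

Lemma leq_card_nbhd_W : #|S| <= #|B|.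
Proof.
rewrite leqNgt; apply/negP => ltBS.
have := cut_size_bipartite adj_simple.1 adj_ess4.2.1 bipX P_sub_X Q_sub_notX P_closed.
rewrite card_P card_Q => cutE.
have C_ge2 : 2 <= #|P :|: Q|.
  by apply: leq_trans (subset_leq_card (subsetUr P Q)); rewrite card_Q addn3.
have Cc_ge2 : 2 <= #|~: (P :|: Q)|.
  apply: leq_trans (subset_leq_card nbhd_yD1_sub_setC).
  by have := cardsD1 x (nbhd adj y); rewrite adj_ess4.2.1; lia.
have [cut0|cut3] : cut_size adj (P :|: Q) = 0 \/ cut_size adj (P :|: Q) = 3 by lia.
  have /card_gt0P[d dCc] : 0 < #|~: (P :|: Q)| by apply: leq_trans Cc_ge2.
  have xC : x \in P :|: Q by rewrite !inE eqxx.
  have := connected_closed d adj_ess4.1 isT (cut_size0_closed adj_simple.1 cut0) xC.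
  by rewrite inE in dCc; apply/negP.
exact: ess_4_edge_connected_cut3 adj_ess4 cut3 C_ge2 Cc_ge2.
Qed.

End HallViolator.

Lemma hall_condition_nbhd_W : hall_condition (fun u => nbhd adj u :&: W) (X :&: W).
Proof. exact: leq_card_nbhd_W. Qed.

End NeighbourhoodsRemoved.

Unset Implicit Arguments.

Theorem lemma2p12 (V : finType) (adj : rel V) (X : {set V}) (x y : V) :
  simple_graph adj ->
  ess_4_edge_connected adj ->
  bipartition adj X ->
  x \in X -> y \in ~: X ->
  has_perfect_matching_on adj (~: (cnbhd adj x :|: cnbhd adj y)).
Proof.
move=> adj_simple adj_ess4 bipX xX; rewrite inE => yNX.
set W := ~: _; set L := X :&: W; set R := ~: X :&: W.
have [f f_sdr] := hall_sdr x (hall_condition_nbhd_W adj_simple adj_ess4 bipX xX yNX).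
have hallR : hall_condition (fun u => nbhd adj u :&: W) R.
  rewrite /R /W setUC; apply: hall_condition_nbhd_W; rewrite ?inE ?negbK //.
  exact: bipartitionC.
have [g g_sdr] := hall_sdr x hallR.
have WE : W = L :|: R by rewrite -setIUl setUCr setTI.
exists [set [set u; f u] | u in L]; rewrite WE; apply: sdr_perfect_matching.
- by rewrite disjoints_subset setCI setCK (subset_trans (subsetIl X W) (subsetUl _ _)).
- apply: sdr_sub f_sdr => u /setIP[uX _]; apply/subsetP => b /setIP[ub bW].
  rewrite inE in ub; apply/setIP; split; first by rewrite inE.
  by apply/setIP; split; rewrite // inE -(bipartition_adj bipX ub).
- apply: sdr_leq_card g_sdr _ => u /setIP[uNX _]; apply/subsetP => b /setIP[ub bW].
  rewrite inE in ub; apply/setIP; split=> //.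
  by move: uNX; rewrite inE (bipartition_adj bipX ub) negbK.
Qed.
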